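(* In the setting below, let $A\in\Lambda^1(M,\mathfrak g)$, $B\in\Lambda^2(M,\mathfrak h)$, with fake 2-curvature $\Omega_1=dA+\tfrac12[A,A]-\alpha(B)$ and 2-curvature $\Omega_2=dB+A\triangleright B$, and let $\mathrm{CS}_4(A,B)=\langle 2F-\alpha(B),B\rangle_{\mathfrak g,\mathfrak h}-d\langle A,B\rangle_{\mathfrak g,\mathfrak h}$ with $F=dA+\tfrac12[A,A]$ (equivalently $\mathrm{CS}_4=\langle\!\langle\mathcal A,\underline d\mathcal A+\tfrac13[\mathcal A,\mathcal A]\rangle\!\rangle$ for $\mathcal A=A+B\xi$, $k=-1$). Then $$d\,\mathrm{CS}_4(A,B)=2\langle\Omega_1,\Omega_2\rangle_{\mathfrak g,\mathfrak h}=\langle\!\langle\mathcal F,\mathcal F\rangle\!\rangle,\qquad\mathcal F=\Omega_1+\Omega_2\xi .$$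
   Context: Lie 2-algebra $\mathcal O=(\mathfrak h,\mathfrak g;\alpha,\triangleright)$ of a Lie crossed module $(H,G;\bar\alpha,\bar\triangleright)$: $\alpha:\mathfrak h\to\mathfrak g$, $\triangleright:\mathfrak g\to\mathrm{Der}(\mathfrak h)$ Lie homomorphisms, $\alpha(X\triangleright Y)=[X,\alpha(Y)]$, $\alpha(Y)\triangleright Y'=[Y,Y']$. A $G$-invariant pairing $\langle-,-\rangle_{\mathfrak g,\mathfrak h}:\mathfrak g\times\mathfrak h\to\mathbb R$ is non-degenerate bilinear with $\langle gXg^{-1},g\triangleright Y\rangle=\langle X,Y\rangle$, $\langle\alpha(Y_1),Y_2\rangle=\langle\alpha(Y_2),Y_1\rangle$, $\langle[X_1,X_2],Y\rangle=-\langle X_2,X_1\triangleright Y\rangle$; on a smooth manifold $M$ it extends to forms by $\langle A,B\rangle=A^a\wedge B^b\langle X_a,Y_b\rangle$, and $[\cdot,\cdot]$, $\triangleright$, $\alpha$, $d$ act componentwise on Lie-algebra-valued forms. Type $N=1$ generalized forms: $U+V\xi$ ($U\in\Lambda^p(M,\mathfrak g)$, $V\in\Lambda^{p+1}(M,\mathfrak h)$, $\xi$ formal of degree $-1$), with bracket $[\mathcal W_1,\mathcal W_2]=[U_1,U_2]+(U_1\triangleright V_2-(-1)^{pq}U_2\triangleright V_1)\xi$, derivative $\underline d(U+V\xi)=dU+(-1)^{p+1}k\alpha(V)+(dV)\xi$, and pairing $\langle\!\langle\mathcal W_1,\mathcal W_2\rangle\!\rangle=\langle U_1,V_2\rangle+(-1)^{pq}\langle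 U_2,V_1\rangle$ for degrees $p,q$. *)

From HB Require Import structures.
From mathcomp Require Import all_boot all_order all_algebra.
Set Implicit Arguments. Unset Strict Implicit. Unset Printing Implicit Defensive.
Import Order.TTheory GRing.Theory Num.Theory.
Local Open Scope ring_scope.

Section Defs.
Variable R : realFieldType.

(* Real-valued differential forms: a graded-commutative differential   *)
(* graded R-algebra (Om, deg, d); deg p x means "x is a p-form".        *)
Definition is_cdga (Om : algType R) (deg : nat -> Om -> Prop) (d : Om -> Om) : Prop :=
  (forall p, deg p 0) /\
      (forall p (a : R) x y, deg p x -> deg p y -> deg p (a *: x + y)) /\
      deg 0%N 1 /\
      (forall p q x y, deg p x -> deg q y -> deg (p + q)%N (x * y)) /\
      (forall p q x y, deg p x -> deg q y -> x * y = (-1) ^+ (p * q) *: (y * x)) /\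
      (forall (a : R) x y, d (a *: x + y) = a *: d x + d y) /\
      (forall p x, deg p x -> deg p.+1 (d x)) /\
      (forall p x y, deg p x -> d (x * y) = d x * y + (-1) ^+ p *: (x * d y)) /\
      (forall x, d (d x) = 0).

Definition linear_map (U V : lmodType R) (f : U -> V) : Prop :=
  forall (a : R) x y, f (a *: x + y) = a *: f x + f y.

Definition bilinear_map (U V W : lmodType R) (f : U -> V -> W) : Prop :=
  (forall (a : R) x x' y, f (a *: x + x') y = a *: f x y + f x' y) /\
  (forall (a : R) x y y', f x (a *: y + y') = a *: f x y + f x y').

Definition is_lie (L : lmodType R) (br : L -> L -> L) : Prop :=
  [/\ bilinear_map br, (forall x, br x x = 0)
    & (forall x y z, br x (br y z) + br y (br z x) + br z (br x y) = 0)].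

Definition is_lie2alg (g h : lmodType R) (brg : g -> g -> g) (brh : h -> h -> h)
    (al : h -> g) (act : g -> h -> h) : Prop :=
  is_lie brg /\ is_lie brh /\ linear_map al /\ bilinear_map act /\
      (forall y y', al (brh y y') = brg (al y) (al y')) /\
      (forall x y y', act x (brh y y') = brh (act x y) y' + brh y (act x y')) /\
      (forall x1 x2 y, act (brg x1 x2) y = act x1 (act x2 y) - act x2 (act x1 y)) /\
      (forall x y, al (act x y) = brg x (al y)) /\
      (forall y y', act (al y) y' = brh y y').

Definition is_inv_pairing (g h : lmodType R) (brg : g -> g -> g)
    (al : h -> g) (act : g -> h -> h) (pr : g -> h -> R) : Prop :=
  (forall (a : R) x x' y, pr (a *: x + x') y = a * pr x y + pr x' y) /\
      (forall (a : R) x y y', pr x (a *: y + y') = a * pr x y + pr x y') /\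
      (forall x, (forall y, pr x y = 0) -> x = 0) /\
      (forall y, (forall x, pr x y = 0) -> y = 0) /\
      (forall y1 y2, pr (al y1) y2 = pr (al y2) y1) /\
      (forall x1 x2 y, pr (brg x1 x2) y = - pr x2 (act x1 y)).

(* V-valued forms: finite sums  sum_i w_i (x) v_i, represented by the  *)
(* list of pairs (w_i, v_i).                                           *)
Section Forms.
Variable Om : algType R.

Definition vform (V : Type) := seq (Om * V).

Fixpoint all_deg (V : Type) (deg : nat -> Om -> Prop) (p : nat) (U : vform V) : Prop :=
  match U with [::] => True | z :: U' => deg p z.1 /\ all_deg deg p U' end.

Definition fop (V1 V2 V3 : Type) (op : V1 -> V2 -> V3) (U : vform V1) (W : vform V2)
  : vform V3 := [seq (u.1 * w.1, op u.2 w.2) | u <- U, w <- W].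

Definition fmap (V1 V2 : Type) (f : V1 -> V2) (U : vform V1) : vform V2 :=
  [seq (u.1, f u.2) | u <- U].

Definition fd (V : Type) (d : Om -> Om) (U : vform V) : vform V :=
  [seq (d u.1, u.2) | u <- U].

Definition fscale (V : Type) (c : R) (U : vform V) : vform V :=
  [seq (c *: u.1, u.2) | u <- U].

Definition fadd (V : Type) (U W : vform V) : vform V := U ++ W.

Definition fpair (V1 V2 : Type) (pr : V1 -> V2 -> R) (U : vform V1) (W : vform V2) : Om :=
  \sum_(u <- U) \sum_(w <- W) pr u.2 w.2 *: (u.1 * w.1).

(* Type N=1 generalized forms  U + V xi, stored as the pair (U, V);    *)
(* the degree p is passed explicitly to the operations.               *)
Variables (g h : Type) (brg : g -> g -> g) (al : h -> g) (act : g -> h -> h)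
  (pr : g -> h -> R) (d : Om -> Om).

Definition genform := (vform g * vform h)%type.

Definition gadd (W1 W2 : genform) : genform := (fadd W1.1 W2.1, fadd W1.2 W2.2).
Definition gscale (c : R) (W : genform) : genform := (fscale c W.1, fscale c W.2).

Definition gbr (p q : nat) (W1 W2 : genform) : genform :=
  (fop brg W1.1 W2.1,
   fadd (fop act W1.1 W2.2) (fscale (- (-1) ^+ (p * q)) (fop act W2.1 W1.2))).

Definition gd (k : R) (p : nat) (W : genform) : genform :=
  (fadd (fd d W.1) (fscale ((-1) ^+ p.+1 * k) (fmap al W.2)), fd d W.2).

Definition gpair (p q : nat) (W1 W2 : genform) : Om :=
  fpair pr W1.1 W2.2 + (-1) ^+ (p * q) *: fpair pr W2.1 W1.2.

End Forms.
End Defs.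

(* Expand both sides bilinearly in the blocks dA, [A,A], alpha(B) paired
   against B, dB, A |> B.  The Leibniz rule and d^2 = 0 give
   d<dA,B> = <dA,dB>, d<[A,A],B> = 2<dA,A|>B> + <[A,A],dB> (invariance
   <[X,Y],Z> = <X,Y|>Z>) and d<alpha(B),B> = 2<alpha(B),dB> (symmetry of
   <alpha(-),->).  The two remaining terms of 2<Omega1,Omega2> vanish:
   <[A,A],A|>B> is a cyclic sum killed by the Jacobi identity, and
   <alpha(B),A|>B> changes sign when the two copies of B are exchanged.
   The identities for generalized forms are then sign bookkeeping. *)

From mathcomp Require Import all_boot all_order all_algebra ring.
Set Implicit Arguments.
Unset Strict Implicit.
Unset Printing Implicit Defensive.
Import GRing.Theory.
Local Open Scope ring_scope.

Lemma signr_even (S : pzRingType) n : ~~ odd n -> (-1) ^+ n = 1 :> S.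
Proof. by rewrite -signr_odd => /negbTE ->. Qed.

Lemma signr_oddn (S : pzRingType) n : odd n -> (-1) ^+ n = -1 :> S.
Proof. by rewrite -signr_odd => ->. Qed.

Lemma natmul_lmod_eq0 (R : numFieldType) (V : lmodType R) (x : V) n :
  x *+ n.+1 = 0 -> x = 0.
Proof.
rewrite -scaler_nat => /eqP; rewrite scaler_eq0 Num.Theory.pnatr_eq0 /=.
by move/eqP.
Qed.

Lemma sum3_rot (I : Type) (M : nmodType) (s : seq I) (F : I -> I -> I -> M) :
  \sum_(x <- s) \sum_(y <- s) \sum_(z <- s) F x y z =
  \sum_(x <- s) \sum_(y <- s) \sum_(z <- s) F y z x.
Proof. by rewrite [RHS]exchange_big; apply: eq_bigr => y _; rewrite exchange_big. Qed.

Section LinearCombination4.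
Variables (R : pzRingType) (V : lmodType R).

Definition comb4 (x1 x2 x3 x4 : V) (a1 a2 a3 a4 : R) :=
  a1 *: x1 + a2 *: x2 + a3 *: x3 + a4 *: x4.

Lemma comb4D x1 x2 x3 x4 a1 a2 a3 a4 b1 b2 b3 b4 :
  comb4 x1 x2 x3 x4 a1 a2 a3 a4 + comb4 x1 x2 x3 x4 b1 b2 b3 b4 =
  comb4 x1 x2 x3 x4 (a1 + b1) (a2 + b2) (a3 + b3) (a4 + b4).
Proof.
rewrite /comb4 !scalerDl addrACA; congr (_ + _).
by rewrite addrACA; congr (_ + _); rewrite addrACA.
Qed.

Lemma comb4N x1 x2 x3 x4 a1 a2 a3 a4 :
  - comb4 x1 x2 x3 x4 a1 a2 a3 a4 = comb4 x1 x2 x3 x4 (- a1) (- a2) (- a3) (- a4).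
Proof. by rewrite /comb4 !opprD !scaleNr. Qed.

Lemma comb4Z x1 x2 x3 x4 c a1 a2 a3 a4 :
  c *: comb4 x1 x2 x3 x4 a1 a2 a3 a4 =
  comb4 x1 x2 x3 x4 (c * a1) (c * a2) (c * a3) (c * a4).
Proof. by rewrite /comb4 !scalerDr !scalerA. Qed.

(* Writing each atom as a combination of all four reduces a linear identity
   between them to identities between coefficients in [R]. *)
Lemma comb4_elim (P : V -> V -> V -> V -> Prop) :
  (forall x1 x2 x3 x4, P (comb4 x1 x2 x3 x4 1 0 0 0) (comb4 x1 x2 x3 x4 0 1 0 0)
                         (comb4 x1 x2 x3 x4 0 0 1 0) (comb4 x1 x2 x3 x4 0 0 0 1)) ->
  forall x1 x2 x3 x4, P x1 x2 x3 x4.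
Proof.
move=> HP x1 x2 x3 x4; move: (HP x1 x2 x3 x4).
by rewrite /comb4 !scale0r !scale1r !addr0 !add0r.
Qed.

End LinearCombination4.

Section CDGA.
Variables (R : realFieldType) (Om : algType R) (deg : nat -> Om -> Prop) (d : Om -> Om).
Hypothesis HOm : is_cdga deg d.

Lemma deg_mul p q x y : deg p x -> deg q y -> deg (p + q)%N (x * y).
Proof. by case: HOm => [_ [_ [_ [H _]]]]; apply: H. Qed.

Lemma graded_comm p q x y : deg p x -> deg q y -> x * y = (-1) ^+ (p * q) *: (y * x).
Proof. by case: HOm => [_ [_ [_ [_ [H _]]]]]; apply: H. Qed.

Lemma d_lin a x y : d (a *: x + y) = a *: d x + d y.
Proof. by case: HOm => [_ [_ [_ [_ [_ [H _]]]]]]; apply: H. Qed.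

Lemma deg_d p x : deg p x -> deg p.+1 (d x).
Proof. by case: HOm => [_ [_ [_ [_ [_ [_ [H _]]]]]]]; apply: H. Qed.

Lemma d_mul p x y : deg p x -> d (x * y) = d x * y + (-1) ^+ p *: (x * d y).
Proof. by case: HOm => [_ [_ [_ [_ [_ [_ [_ [H _]]]]]]]]; apply: H. Qed.

Lemma dd x : d (d x) = 0.
Proof. by case: HOm => [_ [_ [_ [_ [_ [_ [_ [_ H]]]]]]]]; apply: H. Qed.

Lemma d0 : d 0 = 0.
Proof.
have E := d_lin 1 0 0; rewrite addr0 !scale1r in E.
by apply: (@addrI _ (d 0)); rewrite addr0 -E.
Qed.

Lemma dD x y : d (x + y) = d x + d y.
Proof. by rewrite -{1}(scale1r x) d_lin scale1r. Qed.

Lemma dZ a x : d (a *: x) = a *: d x.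
Proof. by rewrite -(addr0 (a *: x)) d_lin d0 addr0. Qed.

Lemma dN x : d (- x) = - d x.
Proof. by rewrite -scaleN1r dZ scaleN1r. Qed.

Lemma d_sum (I : Type) (s : seq I) (F : I -> Om) :
  d (\sum_(i <- s) F i) = \sum_(i <- s) d (F i).
Proof. by elim: s => [|i s IH]; rewrite ?big_nil ?d0 // !big_cons dD IH. Qed.

Lemma comm_even p q x y : deg p x -> deg q y -> ~~ odd q -> x * y = y * x.
Proof.
move=> Hx Hy Hq; rewrite (graded_comm Hx Hy) signr_even ?scale1r //.
by rewrite oddM negb_and Hq orbT.
Qed.

Lemma all_deg_cat (V : Type) p (U W : vform Om V) :
  all_deg deg p U -> all_deg deg p W -> all_deg deg p (U ++ W).
Proof. by elim: U => //= u U IH [Hu HU] HW; split; [|apply: IH]. Qed.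

Lemma all_deg_fmap (V1 V2 : Type) (f : V1 -> V2) p (U : vform Om V1) :
  all_deg deg p U -> all_deg deg p (fmap f U).
Proof. by elim: U => //= u U IH [Hu HU]; split; [|apply: IH]. Qed.

Lemma all_deg_fd (V : Type) p (U : vform Om V) :
  all_deg deg p U -> all_deg deg p.+1 (fd d U).
Proof. by elim: U => //= u U IH [Hu HU]; split; [apply: deg_d|apply: IH]. Qed.

Lemma all_deg_fop (X Y V : Type) (op : X -> Y -> V) p q U1 U2 :
  all_deg deg p U1 -> all_deg deg q U2 -> all_deg deg (p + q) (fop op U1 U2).
Proof.
move=> + HU2; elim: U1 => //= u U1 IH [Hu HU1]; apply: all_deg_cat; last exact: IH.
clear IH; elim: U2 HU2 => //= w U2 IHw [Hw HU2].
by split; [apply: deg_mul|apply: IHw].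
Qed.

End CDGA.

Section FormPairing.
Variables (R : realFieldType) (Om : algType R) (V1 V2 : Type) (pr : V1 -> V2 -> R).

Lemma eq_big_deg (M : nmodType) (V : Type) (deg : nat -> Om -> Prop) p
    (U : vform Om V) (F G : Om * V -> M) :
  all_deg deg p U -> (forall u, deg p u.1 -> F u = G u) ->
  \sum_(u <- U) F u = \sum_(u <- U) G u.
Proof.
elim: U => [|u U IH] /=; first by rewrite !big_nil.
by case=> Hu HU E; rewrite !big_cons E // IH.
Qed.

Lemma fpair_addl (U1 U2 : vform Om V1) (W : vform Om V2) :
  fpair pr (fadd U1 U2) W = fpair pr U1 W + fpair pr U2 W.
Proof. by rewrite /fpair /fadd big_cat. Qed.

Lemma fpair_addr (U : vform Om V1) (W1 W2 : vform Om V2) :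
  fpair pr U (fadd W1 W2) = fpair pr U W1 + fpair pr U W2.
Proof. by rewrite /fpair -big_split; apply: eq_bigr => u _; rewrite /fadd big_cat. Qed.

Lemma fpair_scalel c (U : vform Om V1) (W : vform Om V2) :
  fpair pr (fscale c U) W = c *: fpair pr U W.
Proof.
rewrite /fpair /fscale big_map scaler_sumr; apply: eq_bigr => u _.
rewrite scaler_sumr; apply: eq_bigr => w _ /=.
by rewrite -scalerAl !scalerA mulrC.
Qed.

Lemma fpair_scaler c (U : vform Om V1) (W : vform Om V2) :
  fpair pr U (fscale c W) = c *: fpair pr U W.
Proof.
rewrite /fpair scaler_sumr; apply: eq_bigr => u _.
rewrite /fscale big_map scaler_sumr; apply: eq_bigr => w _ /=.
by rewrite -scalerAr !scalerA mulrC.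
Qed.

Lemma fpair_fopl (X Y : Type) (op : X -> Y -> V1) U1 U2 (W : vform Om V2) :
  fpair pr (fop op U1 U2) W = \sum_(u1 <- U1) \sum_(u2 <- U2) \sum_(w <- W)
     pr (op u1.2 u2.2) w.2 *: (u1.1 * u2.1 * w.1).
Proof. by rewrite /fpair /fop big_allpairs_dep. Qed.

Lemma fpair_fopr (X Y : Type) (op : X -> Y -> V2) (U : vform Om V1) W1 W2 :
  fpair pr U (fop op W1 W2) = \sum_(u <- U) \sum_(w1 <- W1) \sum_(w2 <- W2)
     pr u.2 (op w1.2 w2.2) *: (u.1 * (w1.1 * w2.1)).
Proof. by rewrite /fpair; apply: eq_bigr => u _; rewrite /fop big_allpairs_dep. Qed.

Lemma gpair_diag_even p (U : vform Om V1) (W : vform Om V2) : ~~ odd p ->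
  gpair pr p p (U, W) (U, W) = 2 *: fpair pr U W.
Proof.
move=> Hp; rewrite /gpair signr_even ?scale1r ?scaler_nat ?mulr2n //.
by rewrite oddM negb_and Hp.
Qed.

Variables (deg : nat -> Om -> Prop) (d : Om -> Om).
Hypothesis HOm : is_cdga deg d.

Lemma d_fpair p (U : vform Om V1) (W : vform Om V2) : all_deg deg p U ->
  d (fpair pr U W) = fpair pr (fd d U) W + (-1) ^+ p *: fpair pr U (fd d W).
Proof.
move=> HU; rewrite /fpair /fd big_map (d_sum HOm) scaler_sumr -big_split.
apply: (eq_big_deg HU) => u Hu /=.
rewrite (d_sum HOm) big_map scaler_sumr -big_split; apply: eq_bigr => w _ /=.
by rewrite (dZ HOm) (d_mul HOm _ Hu) scalerDr !scalerA mulrC.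
Qed.

Lemma fpair_fd_fd (U : vform Om V1) (W : vform Om V2) : fpair pr (fd d (fd d U)) W = 0.
Proof.
rewrite /fpair /fd !big_map; apply: big1 => u _; apply: big1 => w _.
by rewrite /= (dd HOm) mul0r scaler0.
Qed.

Lemma fpair_fd_fop (X Y : Type) (op : X -> Y -> V1) p U1 U2 (W : vform Om V2) :
  all_deg deg p U1 ->
  fpair pr (fd d (fop op U1 U2)) W =
  fpair pr (fop op (fd d U1) U2) W + (-1) ^+ p *: fpair pr (fop op U1 (fd d U2)) W.
Proof.
have -> : fpair pr (fd d (fop op U1 U2)) W = \sum_(u1 <- U1) \sum_(u2 <- U2)
    \sum_(w <- W) pr (op u1.2 u2.2) w.2 *: (d (u1.1 * u2.1) * w.1).
  by rewrite /fpair /fd big_map /fop big_allpairs_dep.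
move=> HU; rewrite !fpair_fopl /fd big_map scaler_sumr -big_split.
apply: (eq_big_deg HU) => u Hu; rewrite big_map scaler_sumr -big_split.
apply: eq_bigr => v _; rewrite scaler_sumr -big_split; apply: eq_bigr => w _ /=.
by rewrite (d_mul HOm _ Hu) mulrDl scalerDr -scalerAl !scalerA mulrC.
Qed.

End FormPairing.

Section Lie2Pairing.
Variables (R : realFieldType) (g h : lmodType R) (brg : g -> g -> g) (brh : h -> h -> h)
  (al : h -> g) (act : g -> h -> h) (pr : g -> h -> R).
Hypotheses (HL : is_lie2alg brg brh al act) (Hpr : is_inv_pairing brg al act pr).

Lemma brgDl x x' y : brg (x + x') y = brg x y + brg x' y.
Proof. by case: HL => [[[Hl _] _ _] _]; rewrite -{1}(scale1r x) Hl scale1r. Qed.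

Lemma brgDr x y y' : brg x (y + y') = brg x y + brg x y'.
Proof. by case: HL => [[[_ Hr] _ _] _]; rewrite -{1}(scale1r y) Hr scale1r. Qed.

Lemma brg_anticomm x y : brg x y = - brg y x.
Proof.
case: HL => [[_ Hxx _] _]; apply/eqP; rewrite -addr_eq0.
by have := Hxx (x + y); rewrite brgDl !brgDr !Hxx add0r addr0 => ->.
Qed.

Lemma brg_jacobi x y z : brg x (brg y z) + brg y (brg z x) + brg z (brg x y) = 0.
Proof. by case: HL => [[_ _ H] _]. Qed.

Lemma al_act x y : al (act x y) = brg x (al y).
Proof. by case: HL => [_ [_ [_ [_ [_ [_ [_ [H _]]]]]]]]. Qed.

Lemma prD x x' y : pr (x + x') y = pr x y + pr x' y.
Proof. by case: Hpr => [H _]; rewrite -{1}(scale1r x) H mul1r. Qed.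

Lemma pr0 y : pr 0 y = 0.
Proof. by apply: (@addrI _ (pr 0 y)); rewrite -prD !addr0. Qed.

Lemma prN x y : pr (- x) y = - pr x y.
Proof. by apply: (@addrI _ (pr x y)); rewrite -prD !subrr pr0. Qed.

Lemma pr_al y1 y2 : pr (al y1) y2 = pr (al y2) y1.
Proof. by case: Hpr => [_ [_ [_ [_ [H _]]]]]. Qed.

Lemma pr_brl x1 x2 y : pr (brg x1 x2) y = - pr x2 (act x1 y).
Proof. by case: Hpr => [_ [_ [_ [_ [_ H]]]]]. Qed.

Lemma pr_brr x y z : pr (brg x y) z = pr x (act y z).
Proof. by rewrite brg_anticomm prN pr_brl opprK. Qed.

Lemma pr_al_act y x y' : pr (al y) (act x y') = - pr (al y') (act x y).
Proof. by rewrite -pr_brl -al_act pr_al. Qed.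

End Lie2Pairing.

Section LieValuedForms.
Variables (R : realFieldType) (Om : algType R) (deg : nat -> Om -> Prop) (d : Om -> Om)
  (g h : lmodType R) (brg : g -> g -> g) (brh : h -> h -> h)
  (al : h -> g) (act : g -> h -> h) (pr : g -> h -> R).
Hypotheses (HOm : is_cdga deg d) (HL : is_lie2alg brg brh al act)
  (Hpr : is_inv_pairing brg al act pr).

Lemma fpair_fop_brg (U1 U2 : vform Om g) (W : vform Om h) :
  fpair pr (fop brg U1 U2) W = fpair pr U1 (fop act U2 W).
Proof.
rewrite fpair_fopl fpair_fopr; apply: eq_bigr => x _; apply: eq_bigr => y _.
by apply: eq_bigr => b _; rewrite (pr_brr HL Hpr) mulrA.
Qed.

Lemma fpair_fop_brgC p q (U1 U2 : vform Om g) (W : vform Om h) :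
  all_deg deg p U1 -> all_deg deg q U2 ->
  fpair pr (fop brg U1 U2) W = - (-1) ^+ (p * q) *: fpair pr (fop brg U2 U1) W.
Proof.
move=> HU1 HU2; rewrite !fpair_fopl exchange_big scaler_sumr.
apply: (eq_big_deg HU2) => y Hy; rewrite scaler_sumr.
apply: (eq_big_deg HU1) => x Hx; rewrite scaler_sumr; apply: eq_bigr => b _.
rewrite (brg_anticomm HL) (prN Hpr) (graded_comm HOm Hx Hy) -scalerAl !scalerA.
by rewrite !mulNr mulrC.
Qed.

Lemma fpair_fmap_alC p q (U W : vform Om h) : all_deg deg p U -> all_deg deg q W ->
  fpair pr (fmap al U) W = (-1) ^+ (p * q) *: fpair pr (fmap al W) U.
Proof.
move=> HU HW; rewrite /fpair /fmap !big_map exchange_big scaler_sumr.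
apply: (eq_big_deg HW) => w Hw; rewrite scaler_sumr.
apply: (eq_big_deg HU) => u Hu /=.
by rewrite (pr_al Hpr) (graded_comm HOm Hu Hw) !scalerA mulrC.
Qed.

Lemma fpair_al_act_even p q (U : vform Om g) (W : vform Om h) :
  all_deg deg p U -> all_deg deg q W -> ~~ odd q ->
  fpair pr (fmap al W) (fop act U W) = 0.
Proof.
move=> HU HW Hq; rewrite fpair_fopr /fmap big_map /=.
under eq_bigr => v _ do rewrite exchange_big.
set S := (X in X = 0).
suff S_opp : S = - S by apply: (@natmul_lmod_eq0 _ _ _ 1); rewrite mulr2n {1}S_opp addNr.
rewrite {1}/S exchange_big -sumrN /=.
apply: (eq_big_deg HW) => u Hu; rewrite -sumrN.
apply: (eq_big_deg HW) => v Hv; rewrite -sumrN.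
apply: (eq_big_deg HU) => a Ha.
rewrite (pr_al_act HL Hpr) scaleNr; congr (- (_ *: _)).
by rewrite -(comm_even HOm (deg_mul HOm Ha Hu) Hv Hq) (comm_even HOm Ha Hu Hq) mulrA.
Qed.

Definition cubic_sum (U : vform Om g) (W : vform Om h) (f : g -> g -> g -> h -> R) : Om :=
  \sum_(x <- U) \sum_(y <- U) \sum_(z <- U) \sum_(b <- W)
    f x.2 y.2 z.2 b.2 *: (x.1 * y.1 * z.1 * b.1).

(* The product of two forms of equal degree is even, hence central. *)
Lemma cubic_sum_rot p U W f : all_deg deg p U ->
  cubic_sum U W f = cubic_sum U W (fun x y z => f y z x).
Proof.
move=> HU; rewrite /cubic_sum [LHS]sum3_rot.
apply: (eq_big_deg HU) => x Hx; apply: (eq_big_deg HU) => y Hy.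
apply: (eq_big_deg HU) => z Hz; apply: eq_bigr => b _.
have Hyz_even : ~~ odd (p + p) by rewrite addnn odd_double.
by rewrite -(comm_even HOm Hx (deg_mul HOm Hy Hz) Hyz_even) !mulrA.
Qed.

Lemma cubic_sum_jacobi p U W : all_deg deg p U ->
  cubic_sum U W (fun x y z b => pr (brg z (brg x y)) b) = 0.
Proof.
move=> HU; set J := cubic_sum U W _.
have E0 : cubic_sum U W (fun x y z b => pr (brg x (brg y z)) b) = J.
  by rewrite (cubic_sum_rot _ _ HU) (cubic_sum_rot _ _ HU).
have E1 : cubic_sum U W (fun x y z b => pr (brg y (brg z x)) b) = J.
  by rewrite (cubic_sum_rot _ _ HU).
apply: (@natmul_lmod_eq0 _ _ _ 2).
rewrite mulrSr mulr2n -{1}E0 -{1}E1 /J /cubic_sum -!big_split.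
apply: big1 => x _; rewrite -!big_split; apply: big1 => y _; rewrite -!big_split.
apply: big1 => z _; rewrite -!big_split; apply: big1 => b _ /=.
by rewrite -!scalerDl -!(prD Hpr) (brg_jacobi HL) (pr0 Hpr) scale0r.
Qed.

Lemma fpair_fop_brg_act p (U : vform Om g) (W : vform Om h) : all_deg deg p U ->
  fpair pr (fop brg U U) (fop act U W) = 0.
Proof.
move=> HU; rewrite -oppr0 -(cubic_sum_jacobi W HU) fpair_fopl /cubic_sum -sumrN.
apply: eq_bigr => x _; rewrite -sumrN; apply: eq_bigr => y _.
rewrite -sumrN /fop big_allpairs_dep; apply: eq_bigr => z _.
rewrite -sumrN; apply: eq_bigr => b _ /=.
by rewrite (pr_brl Hpr z.2) scaleNr opprK !mulrA.
Qed.

End LieValuedForms.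

Section ChernSimons4.
Variables (R : realFieldType) (Om : algType R) (deg : nat -> Om -> Prop) (d : Om -> Om)
  (g h : lmodType R) (brg : g -> g -> g) (brh : h -> h -> h)
  (al : h -> g) (act : g -> h -> h) (pr : g -> h -> R).
Hypotheses (HOm : is_cdga deg d) (HL : is_lie2alg brg brh al act)
  (Hpr : is_inv_pairing brg al act pr).

Lemma d_fpair_fd p (U : vform Om g) (W : vform Om h) : all_deg deg p U ->
  d (fpair pr (fd d U) W) = (-1) ^+ p.+1 *: fpair pr (fd d U) (fd d W).
Proof.
by move=> HU; rewrite (d_fpair pr HOm W (all_deg_fd HOm HU)) (fpair_fd_fd pr HOm) add0r.
Qed.

Lemma d_fpair_brg_odd p (U : vform Om g) (W : vform Om h) : all_deg deg p U -> odd p ->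
  d (fpair pr (fop brg U U) W) =
  2 *: fpair pr (fd d U) (fop act U W) + fpair pr (fop brg U U) (fd d W).
Proof.
move=> HU Hp; have HdU := all_deg_fd HOm HU.
rewrite (d_fpair pr HOm W (all_deg_fop HOm brg HU HU)) (fpair_fd_fop pr HOm brg U W HU).
rewrite (fpair_fop_brgC HOm HL Hpr W HU HdU) (fpair_fop_brg HL Hpr (fd d U)).
have Hpp : ~~ odd (p + p) by rewrite addnn odd_double.
have Hpp1 : ~~ odd (p * p.+1) by rewrite oddM /= Hp.
rewrite (signr_oddn _ Hp) !(signr_even _ Hpp) !(signr_even _ Hpp1).
by rewrite !scaleN1r opprK scale1r scaler_nat mulr2n.
Qed.

Lemma d_fpair_al_even q (W : vform Om h) : all_deg deg q W -> ~~ odd q ->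
  d (fpair pr (fmap al W) W) = 2 *: fpair pr (fmap al W) (fd d W).
Proof.
move=> HW Hq; rewrite (d_fpair pr HOm W (all_deg_fmap al HW)) signr_even // scale1r.
have -> : fd d (fmap al W) = fmap al (fd d W) by rewrite /fd /fmap -!map_comp.
rewrite (fpair_fmap_alC HOm Hpr (all_deg_fd HOm HW) HW) signr_even ?scale1r.
  by rewrite scaler_nat mulr2n.
by rewrite oddM /= andNb.
Qed.

Definition curv (A : vform Om g) := fadd (fd d A) (fscale (1 / 2) (fop brg A A)).
Definition fake_curv A B := fadd (curv A) (fscale (-1) (fmap al B)).
Definition curv2 A (B : vform Om h) := fadd (fd d B) (fop act A B).
Definition cs4 A B :=
  fpair pr (fadd (fscale 2 (curv A)) (fscale (-1) (fmap al B))) B - d (fpair pr A B).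

Lemma cs4_gpair A B : all_deg deg 1 A ->
  cs4 A B = gpair pr 1 2 (A, B)
              (gadd (gd al d (-1) 1 (A, B))
                    (gscale (1 / 3) (gbr brg act 1 1 (A, B) (A, B)))).
Proof.
move=> HA; rewrite /cs4 /curv /gpair /gadd /gd /gscale /gbr /=.
rewrite !(fpair_addl, fpair_addr, fpair_scalel, fpair_scaler) (d_fpair pr HOm B HA).
rewrite -(fpair_fop_brg HL Hpr).
move: (fpair pr (fd d A) B) (fpair pr (fop brg A A) B) (fpair pr (fmap al B) B)
  (fpair pr A (fd d B)).
apply: comb4_elim => x1 x2 x3 x4.
by rewrite !(comb4D, comb4N, comb4Z); congr comb4; field.
Qed.

Lemma d_cs4 A B : all_deg deg 1 A -> all_deg deg 2 B ->
  d (cs4 A B) = 2 *: fpair pr (fake_curv A B) (curv2 A B).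
Proof.
move=> HA HB; rewrite /cs4 /fake_curv /curv /curv2.
rewrite !(fpair_addl, fpair_addr, fpair_scalel, fpair_scaler).
rewrite (fpair_fop_brg_act HOm HL Hpr B HA) (fpair_al_act_even HOm HL Hpr HA HB) //.
rewrite !(dD HOm, dN HOm, dZ HOm) (dd HOm) (d_fpair_fd B HA) (d_fpair_brg_odd B HA) //.
rewrite (d_fpair_al_even HB) // !scaler0 subr0 !addr0.
move: (fpair pr (fd d A) (fd d B)) (fpair pr (fd d A) (fop act A B))
  (fpair pr (fop brg A A) (fd d B)) (fpair pr (fmap al B) (fd d B)).
apply: comb4_elim => x1 x2 x3 x4.
by rewrite !(comb4D, comb4N, comb4Z); congr comb4; field.
Qed.

End ChernSimons4.

Theorem mainTheorem8
  (R : realFieldType)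
  (Om : algType R) (deg : nat -> Om -> Prop) (d : Om -> Om)
  (g h : lmodType R) (brg : g -> g -> g) (brh : h -> h -> h)
  (al : h -> g) (act : g -> h -> h) (pr : g -> h -> R)
  (HOm : is_cdga deg d)
  (HL : is_lie2alg brg brh al act)
  (Hpr : is_inv_pairing brg al act pr)
  (A : vform Om g) (B : vform Om h)
  (HA : all_deg deg 1 A) (HB : all_deg deg 2 B) :
  let F := fadd (fd d A) (fscale (1 / 2) (fop brg A A)) in
  let Omega1 := fadd F (fscale (-1) (fmap al B)) in
  let Omega2 := fadd (fd d B) (fop act A B) in
  let CS4 := fpair pr (fadd (fscale 2 F) (fscale (-1) (fmap al B))) B
             - d (fpair pr A B) in
  let cA : genform Om g h := (A, B) in
  let cF : genform Om g h := (Omega1, Omega2) in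
  [/\ CS4 = gpair pr 1 2 cA
              (gadd (gd al d (-1) 1 cA) (gscale (1 / 3) (gbr brg act 1 1 cA cA))),
      d CS4 = 2 *: fpair pr Omega1 Omega2
    & 2 *: fpair pr Omega1 Omega2 = gpair pr 2 2 cF cF].
Proof.
move=> F Omega1 Omega2 CS4 cA cF; split.
- exact: (cs4_gpair HOm HL Hpr B HA).
- exact: (d_cs4 HOm HL Hpr HA HB).
- by rewrite gpair_diag_even.
Qed.
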